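(* Let $\Sigma$ be an alphabet and $L\ge n\ge 1$. Let $h_1:\Sigma\to\mathrm{GF}(2)[x]/(x^L+1)$ be a random function whose values $h_1(c)$, $c\in\Sigma$, are mutually independent and uniformly distributed, and let $h(a_1,\dots,a_n)=\sum_{i=1}^n h_1(a_i)x^{n-i}$ computed in $\mathrm{GF}(2)[x]/(x^L+1)$. Fix a set $S$ of $n-1$ bit positions consecutive modulo $L$, and let $\tilde h(a)$ denote the $(L-n+1)$-bit value obtained from $h(a)$ by deleting the bits at positions in $S$. Then $\tilde h$ is pairwise independent: for all distinct $a,a'\in\Sigma^n$ and all $(L-n+1)$-bit values $y,y'$, $P(\tilde h(a)=y\wedge\tilde h(a')=y')=2^{-2(L-n+1)}$.
   Context: This is the Cyclic hash family. Elements of $\mathrm{GF}(2)[x]/(x^L+1)$ are identified with polynomials $\sum_{i=0}^{L-1}c_ix^i$ over $\mathrm{GF}(2)$ (equivalently $L$-bit integers with bit $i$ equal to $c_i$). A set of $m$ positions is consecutive modulo $L$ if it equals $\{k\bmod L,\dots,(k+m-1)\bmod L\}$ for some integer $k$. *)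

From HB Require Import structures.
From mathcomp Require Import all_boot all_order all_algebra.
Set Implicit Arguments. Unset Strict Implicit. Unset Printing Implicit Defensive.
Import GRing.Theory.
Local Open Scope ring_scope.


(* An element of GF(2)[x]/(x^L+1) is stored as its L-bit coefficient vector
   (bit i = coefficient of x^i). *)
Definition cyc (L : nat) := {ffun 'I_L -> 'F_2}.

Definition poly_of_cyc L (v : cyc L) : {poly 'F_2} :=
  \sum_(i < L) v i *: 'X^i.

Definition cyc_of_poly L (p : {poly 'F_2}) : cyc L :=
  [ffun i : 'I_L => (p %% ('X^L + 1))`_i].

(* h(a_1..a_n) = sum_{i=1}^n h1(a_i) x^(n-i) in GF(2)[x]/(x^L+1);
   with 0-based index i, a_{i+1} = tnth a i gets exponent n-1-i. *)
Definition cyclic_hash (Sigma : finType) L n (h1 : {ffun Sigma -> cyc L})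
  (a : n.-tuple Sigma) : cyc L :=
  cyc_of_poly L (\sum_(i < n) poly_of_cyc (h1 (tnth a i)) * 'X^(n.-1 - i)).

Definition consecutive_mod L (S : {set 'I_L}) (m : nat) : Prop :=
  exists k : nat, S = [set i : 'I_L | [exists j : 'I_m, val i == (k + j) %% L]%N].

Definition kept_positions L (S : {set 'I_L}) : seq nat :=
  [seq val i | i <- enum 'I_L & i \notin S].

Definition delete_bits L n (S : {set 'I_L}) (v : cyc L) : {ffun 'I_(L - n + 1)%N -> 'F_2} :=
  [ffun j : 'I_(L - n + 1)%N =>
     let p := nth 0%N (kept_positions S) j in
     (if insub p is Some q then v q else 0%R) : 'F_2].

Definition uprob (T : finType) (E : pred T) : rat :=
  (#|[set x | E x]|%:R / #|T|%:R)%R.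

From HB Require Import structures.
From mathcomp Require Import all_boot all_order all_algebra.
From mathcomp Require Import zify.
Set Implicit Arguments. Unset Strict Implicit. Unset Printing Implicit Defensive.
Import GRing.Theory Num.Theory.
Local Open Scope ring_scope.

(* Put m = L - n + 1.  The map F : h1 |-> (h~(a), h~(a')) from the finite
   Z-module of functions Sigma -> GF(2)[x]/(x^L + 1) to GF(2)^(2m) is additive,
   so if it is onto, all its fibres have the same size and every pair (y, y')
   has probability 2^(-2m).  Surjectivity is proved dually: a linear form
   (u, u') vanishing on the image of F induces weights Lam, Lam' on the L bit
   positions which vanish on the deleted window S = {k, ..., k + n - 2}.
   Evaluating F on the functions that are a single monomial x^i at a single
   symbol c shows that the "window polynomials" l, l' (of degree < m, reading
   Lam, Lam' cyclically from just after S) satisfy l P_a(c) + l' P_a'(c) = 0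
   for every c, where P_b(c) = sum of the x^r over the positions r with b_r = c.
   Summing over c yields l' = -l, and then a <> a' forces l = 0; hence
   Lam = Lam' = 0 and (u, u') = 0. *)

HB.instance Definition _ (aT : finType) (rT : finZmodType) :=
  GRing.Zmodule.on {ffun aT -> rT}.

Section AdditiveFibres.
Variables (T B : finZmodType) (f : T -> B).
Hypothesis fD : {morph f : x y / x + y}.
Hypothesis f_onto : forall z, exists x, f x = z.

(* All fibres of an onto additive map are translates of the kernel, so they
   partition the domain into #|B| classes of equal size. *)
Lemma card_fibre z : (#|[set x | f x == z]| * #|B| = #|T|)%N.
Proof.
have fibreE w : #|[set x | f x == w]| = #|[set x | f x == 0]|.
  have [x0 <-] := f_onto w.
  rewrite -(card_preimset _ (addIr x0)); apply: eq_card => x.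
  by rewrite !inE fD -{2}(add0r (f x0)) (inj_eq (addIr _)).
rewrite fibreE -[RHS]sum1_card (partition_big f xpredT) //=.
rewrite (eq_bigr (fun _ => #|[set x | f x == 0]|)); first by rewrite sum_nat_const mulnC cardE.
by move=> w _; rewrite -(fibreE w) -sum1_card; apply: eq_bigl => x; rewrite inE.
Qed.

Lemma uprob_fibre z : uprob (fun x => f x == z) = (#|B|%:R)^-1.
Proof.
have fibre_gt0 : (0 < #|[set x | f x == z]|)%N.
  by have [x fx] := f_onto z; apply/card_gt0P; exists x; rewrite inE fx.
rewrite /uprob -(card_fibre z) natrM invfM mulrA divff ?mul1r //.
by rewrite pnatr_eq0 -lt0n.
Qed.

End AdditiveFibres.

Lemma eq_uprob (T : finType) (E E' : pred T) : E =1 E' -> uprob E = uprob E'.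
Proof.
by move=> eqE; rewrite /uprob; congr (_%:R / _); apply: eq_card => x; rewrite !inE eqE.
Qed.

(* Its image is the row space
   of the matrix listing all values, which is then full. *)
Lemma onto_of_dual_inj (p : nat) (T : finZmodType) (M : nat) (f : T -> 'rV['F_p]_M) :
  prime p -> {morph f : x y / x + y} ->
  (forall u : 'rV_M, (forall x, f x *m u^T = 0) -> u = 0) ->
  forall z, exists x, f x = z.
Proof.
move=> p_pr fD dual_inj z.
have f0 : f 0 = 0 by apply: (addrI (f 0)); rewrite -fD !addr0.
have fMn x d : f (x *+ d) = f x *+ d.
  by elim: d => [|d IHd]; rewrite ?mulr0n ?f0 // !mulrS fD IHd.
have natr_Fp (d : 'F_p) : (d : nat)%:R = d.
  by apply/val_inj; rewrite /= (val_Fp_nat p_pr) modn_small // -{2}(Fp_cast p_pr) ltn_ord.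
pose A := \matrix_(i < #|T|) f (enum_val i).
have fA x : f x = row (enum_rank x) A by rewrite rowK enum_rankK.
have A_full : row_full A.
  suff /eqP : kermx A^T = 0 by rewrite kermx_eq0 /row_free mxrank_tr.
  apply/row_matrixP => i; rewrite row0; apply: dual_inj => x.
  have /(congr1 trmx) : row i (kermx A^T) *m A^T = 0 by rewrite -row_mul mulmx_ker row0.
  by rewrite trmx_mul trmxK trmx0 fA -row_mul => ->; rewrite row0.
have /submxP [D ->] := submx_full z A_full.
exists (\sum_i enum_val i *+ D 0 i).
rewrite mulmx_sum_row (big_morph f fD f0); apply: eq_bigr => i _.
by rewrite fMn rowK -scaler_nat natr_Fp.
Qed.

Lemma modp_Xn_cyclic (F : fieldType) (L e : nat) : (0 < L)%N ->
  ('X^e : {poly F}) %% ('X^L - 1) = 'X^(e %% L).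
Proof.
move=> L_gt0.
have -> : ('X^e : {poly F}) =
    ('X^(e %% L) * \sum_(i < e %/ L) ('X^L) ^+ i) * ('X^L - 1) + 'X^(e %% L).
  rewrite -mulrA (mulrC _ ('X^L - 1)) -subrX1 mulrBr mulr1 subrK.
  by rewrite -exprM -exprD addnC mulnC -divn_eq.
by rewrite modp_addl_mul_small // size_polyXn size_Xn_sub_1 // ltnS ltn_pmod.
Qed.

Lemma XnD1_F2 (L : nat) : ('X^L + 1 : {poly 'F_2}) = 'X^L - 1.
Proof. by congr (_ + _); rewrite -polyCN; congr (_%:P); apply/val_inj. Qed.

Section SymbolPolys.
Variables (R : nzRingType) (Sigma : finType).

Definition symbol_poly (n : nat) (b : n.-tuple Sigma) (c : Sigma) : {poly R} :=
  \sum_(r < n) (tnth b r == c)%:R *: 'X^r.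

Lemma coef_symbol_poly n (b : n.-tuple Sigma) c (r : 'I_n) :
  (symbol_poly b c)`_r = (tnth b r == c)%:R.
Proof.
rewrite /symbol_poly coef_sum (bigD1 r) //= coefZ coefXn eqxx mulr1 big1 ?addr0 //.
move=> i ir; rewrite coefZ coefXn (_ : (r == i :> nat) = false) ?mulr0 //.
by rewrite eq_sym; exact: negbTE ir.
Qed.

(* Every position carries exactly one symbol. *)
Lemma sum_symbol_poly n (b : n.-tuple Sigma) :
  \sum_c symbol_poly b c = \sum_(r < n) 'X^r.
Proof.
rewrite /symbol_poly exchange_big; apply: eq_bigr => r _.
rewrite -scaler_suml (bigD1 (tnth b r)) //= eqxx big1 ?addr0 ?scale1r //.
by move=> c /negbTE; rewrite eq_sym => ->.
Qed.

End SymbolPolys.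

(* The cancellation at the heart of the proof: if l P_a(c) + l' P_a'(c)
   vanishes for every symbol c and a <> a', then l = 0.  Summing over c
   gives (l + l') (1 + x + ... + x^n) = 0, so l' = -l and l kills every
   difference P_a(c) - P_a'(c), one of which is nonzero. *)
Lemma symbol_poly_cancel (R : idomainType) (Sigma : finType) n
    (a a' : n.+1.-tuple Sigma) (l l' : {poly R}) :
  a != a' -> (forall c, l * symbol_poly R a c + l' * symbol_poly R a' c = 0) -> l = 0.
Proof.
move=> neq_aa' vanish.
have J_neq0 : \sum_(r < n.+1) ('X^r : {poly R}) != 0.
  apply/eqP => /(congr1 (fun q : {poly R} => q`_0)).
  rewrite coef_sum big_ord_recl coefXn eqxx big1 ?addr0 ?coef0 => [|i _]; last first.
    by rewrite coefXn.
  by move/eqP; rewrite oner_eq0.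
have l'E : l' = - l.
  have : (l + l') * \sum_(r < n.+1) 'X^r = 0.
    rewrite mulrDl -{1}(sum_symbol_poly R a) -(sum_symbol_poly R a') !mulr_sumr -big_split.
    by rewrite big1 // => c _; apply: vanish.
  by move/eqP; rewrite mulf_eq0 (negbTE J_neq0) orbF addr_eq0 => /eqP ->; rewrite opprK.
apply/eqP; apply: contraNT neq_aa' => l_neq0; apply/eqP/eq_from_tnth => r.
have : l * (symbol_poly R a (tnth a r) - symbol_poly R a' (tnth a r)) = 0.
  by rewrite mulrBr -mulNr -l'E vanish.
move/eqP; rewrite mulf_eq0 (negbTE l_neq0) subr_eq0 => /eqP/(congr1 (coefp r)).
by rewrite /= !coef_symbol_poly eqxx; case: eqP => [-> // | _ /eqP]; rewrite oner_eq0.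
Qed.
Section WindowPoly.
Variables (R : comNzRingType) (L n1 k : nat) (Lam : nat -> R).
Hypothesis n1_lt_L : (n1 < L)%N.
Hypothesis Lam_window : forall j, (j < n1)%N -> Lam ((k + j) %% L)%N = 0.

Definition window_poly : {poly R} := \poly_(s < L - n1) Lam ((k + n1 + s) %% L)%N.

(* Shifting the window polynomial by x^r (r <= n1) reads Lam shifted by n1 - r:
   the coefficients that fall outside the window land on zeros of Lam. *)
Lemma coef_window_shift r e : (r <= n1)%N -> (e < L)%N ->
  (window_poly * 'X^r)`_e = Lam ((k + e + (n1 - r)) %% L)%N.
Proof.
move=> r_le e_lt; rewrite coefMXn coef_poly.
case: (ltnP e r) => [e_lt_r | r_le_e].
  by rewrite -addnA Lam_window //; lia.
case: (ltnP (e - r) (L - n1)) => [in_window | past_window].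
  by congr (Lam (_ %% _)); lia.
have -> : (k + e + (n1 - r) = k + (e - r - (L - n1)) + L)%N by lia.
by rewrite modnDr Lam_window //; lia.
Qed.

Lemma window_poly_eq0 : window_poly = 0 -> forall q, (q < L)%N -> Lam q = 0.
Proof.
move=> w0 q q_lt.
have Lam_after s : (s < L)%N -> Lam ((k + n1 + s) %% L)%N = 0.
  move=> s_lt; case: (ltnP s (L - n1)) => [s_in | s_past].
    by move/(congr1 (coefp s)): w0; rewrite /= coef_poly s_in coef0.
  have -> : (k + n1 + s = k + (s - (L - n1)) + L)%N by lia.
  by rewrite modnDr Lam_window //; lia.
have L_gt0 : (0 < L)%N by lia.
rewrite -(modn_small q_lt) -(Lam_after ((q + (L - (k + n1) %% L)) %% L)%N) ?ltn_pmod //.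
congr (Lam _); rewrite modnDmr -modnDml.
have := ltn_pmod (k + n1)%N L_gt0; set x := ((k + n1) %% L)%N => x_lt.
by rewrite (_ : (x + (q + (L - x)) = q + L)%N) ?modnDr //; lia.
Qed.

Lemma coef_window_symbol (Sigma : finType) (b : n1.+1.-tuple Sigma) c e :
  (window_poly * symbol_poly R b c)`_e =
  if (e < L)%N then
    \sum_(r < n1.+1) (tnth b r == c)%:R * Lam (((k + e) %% L + (n1 - r)) %% L)%N
  else 0.
Proof.
rewrite /symbol_poly mulr_sumr coef_sum; case: ltnP => [e_lt | e_ge].
  apply: eq_bigr => r _.
  by rewrite -scalerAr coefZ modnDml coef_window_shift // -ltnS.
rewrite big1 // => r _; rewrite -scalerAr coefZ coefMXn coef_poly.
have r_lt := ltn_ord r.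
by rewrite ifN ?ifN ?mulr0 //; apply/negP; lia.
Qed.

End WindowPoly.

Section CyclicHash.
Variables (Sigma : finType) (L : nat).

Lemma poly_of_cycD (v w : cyc L) : poly_of_cyc (v + w) = poly_of_cyc v + poly_of_cyc w.
Proof. by rewrite /poly_of_cyc -big_split; apply: eq_bigr => i _; rewrite ffunE scalerDl. Qed.

Lemma poly_of_cyc0 : poly_of_cyc (0 : cyc L) = 0.
Proof. by rewrite /poly_of_cyc big1 // => i _; rewrite ffunE scale0r. Qed.

Lemma cyc_of_polyD (p q : {poly 'F_2}) :
  cyc_of_poly L (p + q) = cyc_of_poly L p + cyc_of_poly L q.
Proof. by apply/ffunP => i; rewrite !ffunE modpD coefD. Qed.

Lemma cyclic_hashD n (h1 h2 : {ffun Sigma -> cyc L}) (b : n.-tuple Sigma) :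
  cyclic_hash (h1 + h2) b = cyclic_hash h1 b + cyclic_hash h2 b.
Proof.
rewrite /cyclic_hash -cyc_of_polyD -big_split; congr cyc_of_poly.
by apply: eq_bigr => i _; rewrite ffunE poly_of_cycD mulrDl.
Qed.

Lemma delete_bitsD n (S : {set 'I_L}) (v w : cyc L) :
  delete_bits n S (v + w) = delete_bits n S v + delete_bits n S w.
Proof.
apply/ffunP => j; rewrite !ffunE /=.
by case: insub => [q|]; rewrite ?ffunE ?addr0.
Qed.

Definition bit_fun (c : Sigma) (i : 'I_L) : {ffun Sigma -> cyc L} :=
  [ffun d => if d == c then [ffun q => (q == i)%:R] else 0].

(* Its hash on b is the sum of the monomials x^(i + n - 1 - r) mod (x^L + 1)
   over the positions r where b carries c; pairing it with weights Lam on the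
   bit positions thus reads Lam at the rotated positions i + n - 1 - r. *)
Lemma dot_hash_bit_fun n (b : n.-tuple Sigma) c i (Lam : nat -> 'F_2) :
  \sum_(q < L) cyclic_hash (bit_fun c i) b q * Lam q
  = \sum_(r < n) (tnth b r == c)%:R * Lam ((i + (n.-1 - r)) %% L)%N.
Proof.
have L_gt0 : (0 < L)%N by apply: leq_ltn_trans (ltn_ord i).
have poly_bit : poly_of_cyc [ffun q => ((q == i)%:R : 'F_2)] = 'X^i.
  rewrite /poly_of_cyc (bigD1 i) //= ffunE eqxx scale1r big1 ?addr0 // => j ji.
  by rewrite ffunE (negbTE ji) scale0r.
have hashE q : cyclic_hash (bit_fun c i) b q
    = \sum_(r < n) (tnth b r == c)%:R * ((((i + (n.-1 - r)) %% L)%N == q)%:R).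
  rewrite ffunE XnD1_F2 (big_morph _ (modpD _) (mod0p _)) coef_sum.
  apply: eq_bigr => r _; rewrite ffunE /=.
  case: (tnth b r == c); last by rewrite poly_of_cyc0 !mul0r mod0p coef0.
  by rewrite poly_bit -exprD modp_Xn_cyclic // coefXn eq_sym !mul1r.
under eq_bigr do rewrite hashE mulr_suml.
rewrite exchange_big; apply: eq_bigr => r _ /=.
rewrite (bigD1 (Ordinal (ltn_pmod (i + (n.-1 - r)) L_gt0))) //= eqxx mulr1 big1 ?addr0 //.
move=> q q_neq; rewrite (_ : (_ %% L == val q)%N = false) ?mulr0 ?mul0r //.
by apply: contraNF q_neq => /eqP q_eq; apply/eqP/val_inj.
Qed.

End CyclicHash.

Lemma size_kept_positions (L : nat) (S : {set 'I_L}) :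
  size (kept_positions S) = (L - #|S|)%N.
Proof.
have := cardsCs (~: S); rewrite setCK card_ord => <-.
rewrite size_map size_filter cardE /enum_mem size_filter count_filter.
by apply: eq_count => i; rewrite !inE andbT.
Qed.

Section DeletedBits.
Variables (L n : nat) (S : {set 'I_L}).
Local Notation kept := (kept_positions S).
Local Notation m := (L - n + 1)%N.
Hypothesis size_kept : size kept = m.

Lemma kept_position (j : 'I_m) :
  exists2 q : 'I_L, val q = nth 0%N kept j & q \notin S.
Proof.
have : nth 0%N kept j \in kept by rewrite mem_nth // size_kept.
by case/mapP => q; rewrite mem_filter => /andP [qS _] ->; exists q.
Qed.

Lemma delete_bitsE (v : cyc L) (j : 'I_m) (q : 'I_L) :
  val q = nth 0%N kept j -> delete_bits n S v j = v q.
Proof.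
move=> qE; rewrite /delete_bits ffunE /=.
case: insubP => [q' _ q'E | ]; first by congr (v _); apply: val_inj; rewrite q'E.
by rewrite -qE ltn_ord.
Qed.

Definition position_weights (u : 'rV['F_2]_m) (t : nat) : 'F_2 :=
  \sum_(j < m) (t == nth 0%N kept j)%:R * u 0 j.

Lemma dot_delete_bits (v : cyc L) (u : 'rV_m) :
  \sum_(j < m) delete_bits n S v j * u 0 j = \sum_(q < L) v q * position_weights u q.
Proof.
rewrite /position_weights; under [RHS]eq_bigr do rewrite mulr_sumr.
rewrite exchange_big; apply: eq_bigr => j _.
have [q qE _] := kept_position j.
rewrite (delete_bitsE v qE) (bigD1 q) //= qE eqxx mul1r big1 ?addr0 // => q' q'q.
rewrite (_ : (val q' == nth 0%N kept j) = false) ?mul0r ?mulr0 //.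
by rewrite -qE; apply: contraNF q'q => /eqP/val_inj ->.
Qed.

Lemma position_weights_deleted (u : 'rV_m) (q : 'I_L) :
  q \in S -> position_weights u q = 0.
Proof.
move=> qS; rewrite /position_weights big1 // => j _.
have [q' q'E q'S] := kept_position j.
rewrite (_ : (_ == _) = false) ?mul0r //; apply: contraNF q'S => /eqP qE.
suff -> : q' = q by [].
by apply: val_inj; rewrite q'E -qE.
Qed.

Lemma position_weights_eq0 (u : 'rV_m) :
  (forall q : 'I_L, position_weights u q = 0) -> u = 0.
Proof.
have kept_uniq : uniq kept.
  by rewrite (map_inj_uniq val_inj) filter_uniq ?enum_uniq.
move=> w0; apply/rowP => j; rewrite mxE.
have [q qE _] := kept_position j.
have := w0 q; rewrite /position_weights (bigD1 j) //= qE eqxx mul1r big1 ?addr0 // => j' j'j.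
rewrite (_ : (nth 0%N kept j == nth 0%N kept j') = false) ?mul0r //.
by rewrite nth_uniq ?size_kept //; apply: contraNF j'j => /eqP/val_inj ->.
Qed.

End DeletedBits.

Section Consecutive.
Variables (L m k : nat) (S : {set 'I_L}).
Hypothesis SE : S = [set i : 'I_L | [exists j : 'I_m, val i == (k + j) %% L]%N].

Lemma mem_consecutive (j : nat) (q : 'I_L) :
  (j < m)%N -> val q = ((k + j) %% L)%N -> q \in S.
Proof. by move=> j_lt qE; rewrite SE inE; apply/existsP; exists (Ordinal j_lt); rewrite qE. Qed.

(* At most L consecutive positions are pairwise distinct modulo L. *)
Lemma card_consecutive : (0 < L)%N -> (m <= L)%N -> #|S| = m.
Proof.
move=> L_gt0 m_le.
pose g (j : 'I_m) : 'I_L := Ordinal (ltn_pmod (k + j) L_gt0).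
have -> : S = [set g j | j : 'I_m].
  apply/setP => q; rewrite SE inE; apply/existsP/imsetP => [[j /eqP qE] | [j _ ->]].
    by exists j => //; apply: val_inj.
  by exists j.
rewrite card_imset ?card_ord // => j1 j2 /(congr1 val) /= /eqP.
rewrite eqn_modDl !modn_small ?(leq_trans (ltn_ord _) m_le) //.
by move/eqP/val_inj.
Qed.

End Consecutive.

Section PairHash.
Variables (Sigma : finType) (L n : nat) (S : {set 'I_L}) (a a' : n.-tuple Sigma).
Local Notation m := (L - n + 1)%N.

Definition pair_hash (h1 : {ffun Sigma -> cyc L}) : 'rV['F_2]_(m + m) :=
  row_mx (\row_j delete_bits n S (cyclic_hash h1 a) j)
         (\row_j delete_bits n S (cyclic_hash h1 a') j).

Lemma pair_hashD : {morph pair_hash : h1 h2 / h1 + h2}.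
Proof.
move=> h1 h2; rewrite /pair_hash add_row_mx !cyclic_hashD !delete_bitsD.
by congr row_mx; apply/rowP => j; rewrite !mxE ffunE.
Qed.

Lemma pair_hash_eq (y y' : {ffun 'I_m -> 'F_2}) h1 :
  (pair_hash h1 == row_mx (\row_j y j) (\row_j y' j))
  = (delete_bits n S (cyclic_hash h1 a) == y) && (delete_bits n S (cyclic_hash h1 a') == y').
Proof.
rewrite /pair_hash; apply/eqP/andP => [/eq_row_mx [/rowP ya /rowP ya'] | [/eqP -> /eqP ->]] //.
by split; apply/eqP/ffunP => j; [move: (ya j) | move: (ya' j)]; rewrite !mxE.
Qed.

Lemma pair_hash_dot (w w' : 'rV['F_2]_m) h1 :
  (pair_hash h1 *m (row_mx w w')^T) 0 0
  = \sum_j delete_bits n S (cyclic_hash h1 a) j * w 0 j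
  + \sum_j delete_bits n S (cyclic_hash h1 a') j * w' 0 j.
Proof.
rewrite tr_row_mx mul_row_col !mxE.
by congr (_ + _); apply: eq_bigr => j _; rewrite !mxE.
Qed.

End PairHash.

Section Surjectivity.
Variables (Sigma : finType) (L n1 k : nat) (S : {set 'I_L}) (a a' : n1.+1.-tuple Sigma).
Hypothesis n1_lt_L : (n1 < L)%N.
Hypothesis SE : S = [set i : 'I_L | [exists j : 'I_n1, val i == (k + j) %% L]%N].
Hypothesis neq_aa' : a != a'.

Lemma pair_hash_onto z : exists h1, pair_hash S a a' h1 = z.
Proof.
have L_gt0 : (0 < L)%N by lia.
have size_kept : size (kept_positions S) = (L - n1.+1 + 1)%N.
  by rewrite size_kept_positions (card_consecutive SE) //; lia.
apply: onto_of_dual_inj (pair_hashD S a a') _ z => // u dual0.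
rewrite -[u]hsubmxK in dual0 *.
set w := lsubmx u in dual0 *; set w' := rsubmx u in dual0 *.
pose Lam := position_weights S w; pose Lam' := position_weights S w'.
have window (v : 'rV_(L - n1.+1 + 1)) j :
    (j < n1)%N -> position_weights S v ((k + j) %% L)%N = 0.
  move=> j_lt; apply: (position_weights_deleted size_kept v (q := Ordinal (ltn_pmod _ L_gt0))).
  by apply: (mem_consecutive SE j_lt).
have dual_on_bit_fun c (i : 'I_L) :
    \sum_(r < n1.+1) (tnth a r == c)%:R * Lam ((i + (n1 - r)) %% L)%N
  + \sum_(r < n1.+1) (tnth a' r == c)%:R * Lam' ((i + (n1 - r)) %% L)%N = 0.
  have /matrixP/(_ 0 0) := dual0 (bit_fun c i).
  by rewrite /= pair_hash_dot !(dot_delete_bits size_kept) !dot_hash_bit_fun mxE.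
have window_relation c : window_poly L n1 k Lam * symbol_poly _ a c
              + window_poly L n1 k Lam' * symbol_poly _ a' c = 0.
  apply/polyP => e; rewrite coefD !(coef_window_symbol n1_lt_L (window _)) coef0.
  case: ltnP => [e_lt | _]; last by rewrite addr0.
  exact: (dual_on_bit_fun c (Ordinal (ltn_pmod (k + e) L_gt0))).
have l0 := symbol_poly_cancel neq_aa' window_relation.
have l0' : window_poly L n1 k Lam' = 0.
  apply: (symbol_poly_cancel (a := a') (a' := a) (l' := window_poly L n1 k Lam)).
    by rewrite eq_sym.
  by move=> c; rewrite addrC window_relation.
have Lam_eq0 (v : 'rV_(L - n1.+1 + 1)) :
    window_poly L n1 k (position_weights S v) = 0 -> v = 0.
  move=> v0; apply: (position_weights_eq0 size_kept) => q.
  exact: window_poly_eq0 (window v) v0 _ (ltn_ord q).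
by rewrite (Lam_eq0 _ l0) (Lam_eq0 _ l0') row_mx0.
Qed.

End Surjectivity.

Theorem mainTheorem8 (Sigma : finType) (L n : nat) (hn : (1 <= n)%N) (hnL : (n <= L)%N)
  (S : {set 'I_L}) (hS : consecutive_mod S n.-1)
  (a a' : n.-tuple Sigma) (haa' : a != a')
  (y y' : {ffun 'I_(L - n + 1)%N -> 'F_2}) :
  uprob (fun h1 : {ffun Sigma -> cyc L} =>
           (delete_bits n S (cyclic_hash h1 a) == y) &&
           (delete_bits n S (cyclic_hash h1 a') == y'))
  = ((2%:R : rat) ^+ (2 * (L - n + 1))%N)^-1.
Proof.
case: n hn hnL hS a a' haa' y y' => [// | n1] _ n1_lt_L [k SE] a a' neq_aa' y y'.
rewrite -(eq_uprob (pair_hash_eq S a a' y y')).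
rewrite (uprob_fibre (pair_hashD S a a') (pair_hash_onto n1_lt_L SE neq_aa')).
by rewrite card_mx card_Fp // mul1n natrX addnn -mul2n.
Qed.
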